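(* Let $\kappa$ be a regular cardinal, $\theta<\kappa$, and let $c:{}^{\kappa>}\omega\to\theta$ be a coloring. (1) There are $\nu^*\in{}^{\kappa>}\omega$ and $j<\theta$ such that for every $\nu\in{}^{\kappa>}\omega$ with $\nu^*\trianglelefteq\nu$ there is $\rho\in{}^{\kappa>}\omega$ with $\nu\trianglelefteq\rho$ and $c(\rho)=j$. (2) There is an embedding $h:{}^{\omega>}\omega\to{}^{\kappa>}\omega$ such that $h(\eta)^\frown\langle i\rangle\trianglelefteq h(\eta^\frown\langle i\rangle)$ for all $\eta\in{}^{\omega>}\omega$ and $i<\omega$, and the range of $h$ is monochromatic, i.e. $c(h(\eta))=c(h(\nu))$ for all $\eta,\nu\in{}^{\omega>}\omega$.
   Context: ${}^{\kappa>}\omega$ is the set of sequences of natural numbers indexed by ordinals $<\kappa$; $\trianglelefteq$ is the initial-segment order and $^\frown$ is concatenation. *)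

From Stdlib Require Import List.
Import ListNotations.

(* An infinite regular cardinal kappa is represented by a type K carrying a
   strict well-order [lt] whose order type is kappa: elements of K are exactly
   the ordinals < kappa. *)
Definition regular_cardinal_order {K : Type} (lt : K -> K -> Prop) : Prop :=
  (forall x y z, lt x y -> lt y z -> lt x z) /\
  (forall x, ~ lt x x) /\
  (forall x y, lt x y \/ x = y \/ lt y x) /\
  well_founded lt /\
  (exists f : nat -> K, forall m n, f m = f n -> m = n) /\
  (* a cardinal (initial ordinal): no proper initial segment has size kappa *)
  (forall (a : K) (f : K -> {b : K | lt b a}),
      ~ (forall x y, f x = f y -> x = y)) /\
  (* regular: every subset of size < kappa (image of some alpha < kappa)
     is bounded below kappa *)
  (forall (a : K) (f : {b : K | lt b a} -> K),
      exists g : K, forall x, lt (f x) g).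

(* Elements of ^{kappa>}omega: a length alpha < kappa and values for the
   positions beta < alpha (padded with 0 beyond alpha, so that equality of
   sequences is equality of the record). *)
Record kseq {K : Type} (lt : K -> K -> Prop) : Type := KSeq {
  klen : K;
  kval : K -> nat;
  kpad : forall b, ~ lt b klen -> kval b = 0
}.
Arguments klen {K lt}.
Arguments kval {K lt}.

Definition kinit {K : Type} {lt : K -> K -> Prop} (nu rho : kseq lt) : Prop :=
  (klen nu = klen rho \/ lt (klen nu) (klen rho)) /\
  (forall b, lt b (klen nu) -> kval nu b = kval rho b).

(* nu ^ <i>  ⊴  rho  (nu^<i> has length alpha+1 and value i at alpha) *)
Definition kinit_cons {K : Type} {lt : K -> K -> Prop}
    (nu : kseq lt) (i : nat) (rho : kseq lt) : Prop :=
  lt (klen nu) (klen rho) /\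
  (forall b, lt b (klen nu) -> kval nu b = kval rho b) /\
  kval rho (klen nu) = i.

From Stdlib Require Import List Classical ClassicalEpsilon FunctionalExtensionality.
Import ListNotations.

(* (1) If no colour were dense above any node, a recursion of length theta + 1
   would build a chain (nu_a) such that no extension of nu_a has colour a; by
   regularity of kappa every chain of length < kappa has an upper bound, so the
   recursion survives limit stages.  But nu_theta extends every nu_a, and its
   own colour a = c(nu_theta) < theta is excluded by nu_a.
   (2) Above nu* the colour j is dense, so h is grown along omega^{<omega} by
   extending each h(eta)^<i> to a node of colour j.  Two distinct eta, eta'
   either lie on one branch, and then the lengths of h(eta), h(eta') differ, or
   split after a common prefix m, and then h(eta), h(eta') take different
   values at position klen (h m). *)

Section InitialSegments.

Context {K : Type} {lt : K -> K -> Prop}.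
Hypothesis lt_trans : forall x y z, lt x y -> lt y z -> lt x z.
Hypothesis lt_irrefl : forall x, ~ lt x x.

Lemma kinit_refl (x : kseq lt) : kinit x x.
Proof. split; auto. Qed.

Lemma lt_klen_kinit (x y : kseq lt) b : lt b (klen x) -> kinit x y -> lt b (klen y).
Proof. intros Hb [[<-|L] _]; eauto. Qed.

Lemma kinit_trans (x y z : kseq lt) : kinit x y -> kinit y z -> kinit x z.
Proof.
  intros [Hl1 Hv1] [Hl2 Hv2]; split.
  - destruct Hl1 as [E1|L1], Hl2 as [E2|L2].
    + left; congruence.
    + right; rewrite E1; exact L2.
    + right; rewrite <- E2; exact L1.
    + right; eauto.
  - intros b Hb; rewrite Hv1 by exact Hb.
    apply Hv2; apply (lt_klen_kinit x y b Hb); split; assumption.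
Qed.

Lemma kinit_cons_kinit (x y : kseq lt) i : kinit_cons x i y -> kinit x y.
Proof. intros [L [V _]]; split; auto. Qed.

Lemma kinit_cons_trans (x y z : kseq lt) i :
  kinit_cons x i y -> kinit y z -> kinit_cons x i z.
Proof.
  intros [L [V Vi]] Hyz; split; [|split].
  - exact (lt_klen_kinit y z _ L Hyz).
  - intros b Hb; rewrite V by exact Hb; apply Hyz; eauto.
  - rewrite <- Vi; symmetry; apply Hyz; exact L.
Qed.

Lemma kinit_cons_exists (x : kseq lt) (i : nat) (s : K) :
  lt (klen x) s -> exists y, kinit_cons x i y.
Proof.
  intros Hs.
  set (v := fun b =>
    if excluded_middle_informative (lt b s) then
      if excluded_middle_informative (lt b (klen x)) then kval x b
      else if excluded_middle_informative (b = klen x) then i else 0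
    else 0).
  assert (Hpad : forall b, ~ lt b s -> v b = 0).
  { intros b Hb; unfold v; destruct excluded_middle_informative; tauto. }
  exists (@KSeq K lt s v Hpad); split; [exact Hs|split]; simpl; unfold v.
  - intros b Hb.
    destruct (excluded_middle_informative (lt b s)) as [_|Hn]; [|exfalso; eauto].
    destruct excluded_middle_informative; tauto.
  - destruct (excluded_middle_informative (lt (klen x) s)); [|contradiction].
    destruct excluded_middle_informative as [L|_]; [exfalso; exact (lt_irrefl _ L)|].
    destruct excluded_middle_informative; tauto.
Qed.

Lemma kchain_upper_bound {I : Type} (R : I -> kseq lt) (g : K) :
  (forall x, lt (klen (R x)) g) ->
  (forall x y, kinit (R x) (R y) \/ kinit (R y) (R x)) ->
  exists u, forall x, kinit (R x) u.
Proof.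
  intros Hg Hcomp.
  set (v := fun b =>
    match excluded_middle_informative (exists x, lt b (klen (R x))) with
    | left E => kval (R (proj1_sig (constructive_indefinite_description _ E))) b
    | right _ => 0
    end).
  assert (Hpad : forall b, ~ lt b g -> v b = 0).
  { intros b Hb; unfold v; destruct excluded_middle_informative as [E|_]; [|reflexivity].
    exfalso; destruct E as [x Hx]; eauto. }
  exists (@KSeq K lt g v Hpad); intros x; split; [right; apply Hg|].
  intros b Hb; simpl; unfold v.
  destruct excluded_middle_informative as [E|E]; [|exfalso; eauto].
  destruct (constructive_indefinite_description _ E) as [y Hy]; simpl.
  destruct (Hcomp x y) as [[_ H]|[_ H]]; [apply H | symmetry; apply H]; assumption.
Qed.

Lemma list_prefix_cases {A : Type} (l l' : list A) :
  l = l' \/ (exists i q, l' = l ++ i :: q) \/ (exists i q, l = l' ++ i :: q) \/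
  exists m i i' q q', i <> i' /\ l = m ++ i :: q /\ l' = m ++ i' :: q'.
Proof.
  revert l'; induction l as [|a l IH]; intros [|a' l'].
  - left; reflexivity.
  - right; left; exists a', l'; reflexivity.
  - right; right; left; exists a, l; reflexivity.
  - destruct (classic (a = a')) as [<-|Ha].
    + destruct (IH l')
        as [<-|[[i [q ->]]|[[i [q ->]]|[m [i [i' [q [q' [Hi [-> ->]]]]]]]]]].
      * left; reflexivity.
      * right; left; exists i, q; reflexivity.
      * right; right; left; exists i, q; reflexivity.
      * right; right; right; exists (a :: m), i, i', q, q'; auto.
    + right; right; right; exists [], a, a', l, l'; auto.
Qed.

Section Trees.

Variable h : list nat -> kseq lt.
Hypothesis h_snoc : forall l i, kinit_cons (h l) i (h (l ++ [i])).

Lemma tree_kinit_cons_app l i q : kinit_cons (h l) i (h (l ++ i :: q)).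
Proof.
  induction q as [|k q IH] using rev_ind; [exact (h_snoc l i)|].
  replace (l ++ i :: q ++ [k]) with ((l ++ i :: q) ++ [k])
    by (rewrite <- app_assoc; reflexivity).
  exact (kinit_cons_trans _ _ _ i IH (kinit_cons_kinit _ _ k (h_snoc _ k))).
Qed.

Lemma tree_injective l l' : h l = h l' -> l = l'.
Proof.
  intros E.
  destruct (list_prefix_cases l l')
    as [Hl|[[i [q ->]]|[[i [q ->]]|[m [i [i' [q [q' [Hi [-> ->]]]]]]]]]];
    [exact Hl|exfalso..].
  - destruct (tree_kinit_cons_app l i q) as [L _].
    rewrite <- E in L; exact (lt_irrefl _ L).
  - destruct (tree_kinit_cons_app l' i q) as [L _].
    rewrite E in L; exact (lt_irrefl _ L).
  - apply Hi.
    destruct (tree_kinit_cons_app m i q) as [_ [_ <-]].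
    destruct (tree_kinit_cons_app m i' q') as [_ [_ <-]].
    rewrite E; reflexivity.
Qed.

End Trees.

End InitialSegments.

Lemma snoc_rec_exists {A : Type} (P : A -> Prop) (R : A -> nat -> A -> Prop) :
  (exists x, P x) -> (forall x i, P x -> exists y, P y /\ R x i y) ->
  exists h : list nat -> A,
    (forall l, P (h l)) /\ (forall l i, R (h l) i (h (l ++ [i]))).
Proof.
  intros Hstart Hstep.
  destruct (constructive_indefinite_description _ Hstart) as [x0 Hx0].
  assert (step : forall (x : {x | P x}) (i : nat),
             {y : {y | P y} | R (proj1_sig x) i (proj1_sig y)}).
  { intros [x Hx] i.
    destruct (constructive_indefinite_description _ (Hstep x i Hx)) as [y [Hy Hr]].
    exists (exist _ y Hy); exact Hr. }
  (* recursion on the reversed list, so that snoc becomes cons *)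
  set (g := fix g (l : list nat) : {x | P x} :=
         match l with
         | [] => exist _ x0 Hx0
         | i :: m => proj1_sig (step (g m) i)
         end).
  exists (fun l => proj1_sig (g (rev l))); split.
  - intro l; exact (proj2_sig (g (rev l))).
  - intros l i; rewrite rev_unit; exact (proj2_sig (step (g (rev l)) i)).
Qed.

Section RegularCardinal.

Context {K : Type} {lt : K -> K -> Prop}.
Hypothesis Hk : regular_cardinal_order lt.

Let lt_trans : forall x y z, lt x y -> lt y z -> lt x z.
Proof. now destruct Hk. Qed.
Let lt_irrefl : forall x, ~ lt x x.
Proof. now destruct Hk as (_ & H & _). Qed.
Let lt_total : forall x y, lt x y \/ x = y \/ lt y x.
Proof. now destruct Hk as (_ & _ & H & _). Qed.
Let lt_wf : well_founded lt.
Proof. now destruct Hk as (_ & _ & _ & H & _). Qed.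
Let lt_regular : forall (a : K) (f : {b : K | lt b a} -> K), exists g, forall x, lt (f x) g.
Proof. now destruct Hk as (_ & _ & _ & _ & _ & _ & H). Qed.

Lemma lt_unbounded (a : K) : exists b, lt a b.
Proof.
  destruct Hk as (_ & _ & _ & _ & [e He] & _).
  destruct (classic (exists b, lt b a)) as [[b Hb]|Hmin].
  - destruct (lt_regular a (fun _ => a)) as [g Hg].
    exists g; exact (Hg (exist _ b Hb)).
  - assert (Hx : exists x, x <> a).
    { destruct (classic (e 0 = a)) as [E|E]; [exists (e 1)|exists (e 0); exact E].
      intros E1; rewrite <- E in E1; discriminate (He _ _ E1). }
    destruct Hx as [x Hx]; exists x.
    destruct (lt_total a x) as [H|[H|H]]; [exact H|congruence|].
    exfalso; eauto.
Qed.

Lemma kchain_below_upper_bound (a : K) (nu : K -> kseq lt) :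
  (forall x y, lt x y -> lt y a -> kinit (nu x) (nu y)) ->
  exists u, forall b, lt b a -> kinit (nu b) u.
Proof.
  intros Hchain.
  destruct (lt_regular a (fun x => klen (nu (proj1_sig x)))) as [g Hg].
  destruct (kchain_upper_bound lt_trans (fun x : {b | lt b a} => nu (proj1_sig x)) g Hg)
    as [u Hu].
  - intros [x Hx] [y Hy]; simpl.
    destruct (lt_total x y) as [L|[<-|L]]; auto using kinit_refl.
  - exists u; intros b Hb; exact (Hu (exist _ b Hb)).
Qed.

Section Colouring.

Variable theta : K.
Variable c : kseq lt -> K.
Hypothesis Hc : forall rho, lt (c rho) theta.

Definition colour_dense_above (nustar : kseq lt) (j : K) : Prop :=
  forall nu, kinit nustar nu -> exists rho, kinit nu rho /\ c rho = j.

Definition colour_avoided_above (nu : kseq lt) (a : K) : Prop :=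
  forall rho, kinit nu rho -> c rho <> a.

Lemma avoiding_chain_exists :
  (forall nu a, lt a theta -> exists nu', kinit nu nu' /\ colour_avoided_above nu' a) ->
  exists nu : K -> kseq lt,
    (forall a b, lt b a -> kinit (nu b) (nu a)) /\
    (forall a, lt a theta -> colour_avoided_above (nu a) a).
Proof.
  intros Hescape.
  set (spec := fun a (f : forall b, lt b a -> kseq lt) u =>
         (forall b (Hb : lt b a), kinit (f b Hb) u) /\
         (lt a theta -> colour_avoided_above u a)).
  (* [epsilon] needs [kseq lt] inhabited; the constant zero sequence of length theta is one *)
  pose (inh := inhabits (@KSeq K lt theta (fun _ => 0) (fun _ _ => eq_refl))).
  set (nu := Fix lt_wf (fun _ => kseq lt) (fun a f => epsilon inh (spec a f))).
  assert (nu_eq : forall a, nu a = epsilon inh (spec a (fun b _ => nu b))).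
  { intros a; unfold nu at 1; rewrite Fix_eq; [reflexivity|].
    intros x f f' Hf; replace f' with f; [reflexivity|].
    do 2 (apply functional_extensionality_dep; intro); apply Hf. }
  assert (nu_spec : forall a, spec a (fun b _ => nu b) (nu a)).
  { intros a; induction a as [a IH] using (well_founded_ind lt_wf).
    rewrite nu_eq; apply epsilon_spec.
    destruct (kchain_below_upper_bound a nu) as [u Hu].
    { intros x y Hxy Hy; exact (proj1 (IH y Hy) x Hxy). }
    destruct (classic (lt a theta)) as [Ha|Ha].
    - destruct (Hescape u a Ha) as [u' [Hu' Hav]].
      exists u'; split; [intros b Hb; exact (kinit_trans lt_trans _ _ _ (Hu b Hb) Hu')|auto].
    - exists u; split; [exact Hu|contradiction]. }
  exists nu; split; intros a; apply nu_spec.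
Qed.

Lemma colour_dense_exists : exists nustar j, lt j theta /\ colour_dense_above nustar j.
Proof.
  apply NNPP; intros Hnone.
  destruct avoiding_chain_exists as [nu [Hchain Havoid]].
  - intros nu a Ha; apply NNPP; intros Hn; apply Hnone.
    exists nu, a; split; [exact Ha|].
    intros nu' Hnu'; apply NNPP; intros Hn'; apply Hn.
    exists nu'; split; [exact Hnu'|].
    intros rho Hrho Hcol; apply Hn'; exists rho; auto.
  - exact (Havoid _ (Hc (nu theta)) (nu theta) (Hchain _ _ (Hc _)) eq_refl).
Qed.

Lemma colour_dense_tree (nustar : kseq lt) (j : K) :
  colour_dense_above nustar j ->
  exists h : list nat -> kseq lt,
    (forall eta nu, h eta = h nu -> eta = nu) /\
    (forall eta i, kinit_cons (h eta) i (h (eta ++ [i]))) /\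
    (forall eta, c (h eta) = j).
Proof.
  intros Hdense.
  destruct (snoc_rec_exists (fun x => kinit nustar x /\ c x = j) kinit_cons)
    as [h [HP Hsnoc]].
  - destruct (Hdense nustar (kinit_refl _)) as [rho Hrho]; exists rho; exact Hrho.
  - intros x i [Hx _].
    destruct (lt_unbounded (klen x)) as [s Hs].
    destruct (kinit_cons_exists lt_trans lt_irrefl x i s Hs) as [y Hy].
    assert (Hstar_y : kinit nustar y)
      by exact (kinit_trans lt_trans _ _ _ Hx (kinit_cons_kinit _ _ _ Hy)).
    destruct (Hdense y Hstar_y) as [rho [Hrho Hcol]].
    exists rho; split; [split; [|exact Hcol]|].
    + exact (kinit_trans lt_trans _ _ _ Hstar_y Hrho).
    + exact (kinit_cons_trans lt_trans _ _ _ i Hy Hrho).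
  - exists h; split; [exact (tree_injective lt_trans lt_irrefl h Hsnoc)|].
    split; [exact Hsnoc|intros eta; exact (proj2 (HP eta))].
Qed.

End Colouring.

End RegularCardinal.

Theorem lemma2p13 (K : Type) (lt : K -> K -> Prop)
  (Hk : regular_cardinal_order lt)
  (theta : K) (c : kseq lt -> K) (Hc : forall rho, lt (c rho) theta) :
  (exists (nustar : kseq lt) (j : K), lt j theta /\
     forall nu, kinit nustar nu -> exists rho, kinit nu rho /\ c rho = j) /\
  (exists h : list nat -> kseq lt,
     (forall eta nu, h eta = h nu -> eta = nu) /\
     (forall eta (i : nat), kinit_cons (h eta) i (h (eta ++ [i]))) /\
     (forall eta nu, c (h eta) = c (h nu))).
Proof.
  destruct (colour_dense_exists Hk theta c Hc) as [nustar [j [Hj Hdense]]].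
  split; [exists nustar, j; split; assumption|].
  destruct (colour_dense_tree Hk c nustar j Hdense) as [h [Hinj [Hsnoc Hcol]]].
  exists h; split; [exact Hinj|split; [exact Hsnoc|]].
  intros eta nu; rewrite !Hcol; reflexivity.
Qed.
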